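(* Let $(Q,\Sigma,\Psi)$ be a HMM. For any $\pi_1,\pi_2\in\mathbb{R}^{|Q|}$ we have $\pi_1\equiv\pi_2$ if and only if $\pi_1-\pi_2$ is orthogonal to $\mathrm{Span}\{\Psi(w)\mathbbm{1}^T\mid w\in\Sigma^*\}$.
   Context: Let $(\Sigma,\mathscr{G},\lambda)$ be a measure space where $\Sigma$ is a topological space and every open subset of $\Sigma$ belongs to $\mathscr{G}$ and has positive measure. A HMM is a triple $(Q,\Sigma,\Psi)$ with $Q$ a finite set and $\Psi:\Sigma\to[0,\infty)^{|Q|\times|Q|}$ a piecewise continuous measurable function such that the entrywise integral $\int_\Sigma\Psi\,d\lambda$ is stochastic. $\Psi$ is piecewise continuous if there is an open $C\subseteq\Sigma$ on which $\Psi$ is continuous such that each $x\in\Sigma\setminus C$ is the limit of some sequence $x_n\in C$ with $\Psi(x_n)\to\Psi(x)$. $\Psi$ is extended to finite words by $\Psi(x_1\cdots x_n)=\Psi(x_1)\cdots\Psi(x_n)$ (the empty word giving the identity), $\Sigma^*$ is the set of finite words, $\mathbbm{1}=(1,\dots,1)$, and $\lambda^n$ is the product measure on $\Sigma^n$ with product $\sigma$-algebra $\mathscr{G}^n$. For a row vector $\pi$, $\mathbb{P}_\pi$ is the (for initial distributions: unique probability) measure on $\Sigma^\omega$ determined by $\mathbb{P}_\pi(A\Sigma^\omega)=\pi\left(\int_A\Psi\,d\lambda^n\right)\mathbbm{1}^T$ for cylinder sets $A=A_1\times\dots\times A_n$, $A_i\in\mathscr{G}$, where $A\Sigma^\omega$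 is the set of infinite words whose first $n$ letters lie in $A$. $\pi_1\equiv\pi_2$ means $\mathbb{P}_{\pi_1}(A)=\mathbb{P}_{\pi_2}(A)$ for all measurable $A\subseteq\Sigma^\omega$ (equivalently, $\pi_1\int_E\Psi\,d\lambda^n\mathbbm{1}^T=\pi_2\int_E\Psi\,d\lambda^n\mathbbm{1}^T$ for all $n$ and all $E\in\mathscr{G}^n$). *)

From HB Require Import structures.
From mathcomp Require Import all_boot all_order all_algebra.
From mathcomp Require Import all_classical all_reals all_analysis.

Set Implicit Arguments.
Unset Strict Implicit.
Unset Printing Implicit Defensive.

Import Order.TTheory GRing.Theory Num.Theory.
Import numFieldTopology.Exports numFieldNormedType.Exports.
Local Open Scope classical_set_scope.
Local Open Scope ring_scope.

#[short(type="topMeasurableType")]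
HB.structure Definition TopMeasurable (d : measure_display) :=
  {T of Topological T & Measurable d T}.

Section HMM.
Context {d : measure_display} {T : topMeasurableType d} {R : realType}.

Definition open_pos (lam : {measure set T -> \bar R}) : Prop :=
  forall U : set T, open U -> measurable U /\ (U !=set0 -> (0 < lam U)%E).

Definition psiw {k : nat} (Psi : T -> 'M[R]_k) (w : seq T) : 'M[R]_k :=
  foldr (fun x M => Psi x *m M) 1%:M w.

Definition piecewise_continuous {k : nat} (Psi : T -> 'M[R]_k) : Prop :=
  exists C : set T, open C /\ {within C, continuous Psi} /\
    forall x, ~ C x -> exists u : nat -> T,
      (forall n, C (u n)) /\ (u n @[n --> \oo] --> x) /\
      (Psi (u n) @[n --> \oo] --> Psi x).

(* Integral with respect to the n-fold product measure lambda^n on Sigma^n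
   (n.-tuple T, equipped with the product sigma-algebra G^n), computed as the
   iterated integral  \int lam(dx1) \int lam(dx2) ... f(x1,...,xn). *)
Fixpoint prod_int (lam : {measure set T -> \bar R}) (n : nat)
  : (n.-tuple T -> \bar R) -> \bar R :=
  match n with
  | 0 => fun f => f [tuple]
  | n'.+1 => fun f =>
      (\int[lam]_x prod_int lam (fun t : n'.-tuple T => f (cons_tuple x t)))%E
  end.

(* The entrywise integral  \int_E Psi d lambda^n  (a real matrix; the entries
   are nonnegative extended reals, finite for an HMM). *)
Definition int_psi {k : nat} (lam : {measure set T -> \bar R})
  (Psi : T -> 'M[R]_k) (n : nat) (E : set (n.-tuple T)) : 'M[R]_k :=
  \matrix_(i, j) fine (prod_int lam
      (fun t : n.-tuple T => ((\1_E t : R) * psiw Psi t i j)%:E)).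

Definition is_HMM {k : nat} (lam : {measure set T -> \bar R})
  (Psi : T -> 'M[R]_k) : Prop :=
  [/\ forall x i j, 0 <= Psi x i j,
      forall i j, measurable_fun setT (fun x => Psi x i j),
      piecewise_continuous Psi,
      forall i j, (\int[lam]_x (Psi x i j)%:E)%E \is a fin_num &
      forall i : 'I_k, \sum_(j < k) fine (\int[lam]_x (Psi x i j)%:E)%E = 1].

(* pi1 == pi2 : equality of P_pi1 and P_pi2, in the equivalent form
   pi1 (\int_E Psi d lambda^n) 1^T = pi2 (\int_E Psi d lambda^n) 1^T
   for all n and all E in G^n. *)
Definition hmm_equiv {k : nat} (lam : {measure set T -> \bar R})
  (Psi : T -> 'M[R]_k) (pi1 pi2 : 'rV[R]_k) : Prop :=
  forall (n : nat) (E : set (n.-tuple T)), measurable E ->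
    pi1 *m int_psi lam Psi E *m (const_mx 1 : 'cV[R]_k)
    = pi2 *m int_psi lam Psi E *m (const_mx 1 : 'cV[R]_k).

(* v is orthogonal to Span {Psi(w) 1^T | w in Sigma^*}: v annihilates every
   element of the span of every finite subfamily of the generators. *)
Definition orth_span_words {k : nat} (Psi : T -> 'M[R]_k) (v : 'rV[R]_k)
  : Prop :=
  forall (ws : seq (seq T)) (u : 'cV[R]_k),
    u \in <<[seq psiw Psi w *m (const_mx 1 : 'cV[R]_k) | w <- ws]>>%VS ->
    v *m u = 0.

End HMM.

(* Let K be the set of row vectors r with r (\int_E Psi dlam^n) 1^T = 0 for
   all n and all measurable E, so that pi1 == pi2 iff pi1 - pi2 lies in K.
   For r in K, a measurable B and an open U, the cylinder U x B gives
   r (\int_U Psi dlam) (\int_B Psi dlam^n) 1^T = 0. Since nonempty open sets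
   have positive measure, the function x |-> r Psi(x) (\int_B Psi dlam^n) 1^T
   then vanishes wherever Psi is continuous, hence everywhere by piecewise
   continuity: K is stable under right multiplication by every Psi(x), hence
   by every Psi(w), and n = 0 gives r Psi(w) 1^T = 0. Conversely, if
   v Psi(w) 1^T = 0 for every word w, write v = v+ - v- with nonnegative
   v+, v-: the nonnegative integrands v+ Psi(t) 1^T and v- Psi(t) 1^T
   coincide, so v+ and v- give the same iterated integrals. *)

From HB Require Import structures.
From mathcomp Require Import all_boot all_order all_algebra.
From mathcomp Require Import all_classical all_reals all_analysis.
From mathcomp Require Import measurable_realfun lra.

Import Order.TTheory GRing.Theory Num.Theory.
Import numFieldTopology.Exports numFieldNormedType.Exports.
Local Open Scope classical_set_scope.
Local Open Scope ring_scope.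
Set Implicit Arguments.
Unset Strict Implicit.
Unset Printing Implicit Defensive.

Section mx_form.
Context {R : realType} {m n : nat}.
Implicit Types (a : 'rV[R]_m) (M : 'M[R]_(m, n)) (b : 'cV[R]_n).

Lemma mx_formE a M b :
  (a *m M *m b) 0 0 = \sum_(p : 'I_m * 'I_n) a 0 p.1 * b p.2 0 * M p.1 p.2.
Proof.
rewrite -(pair_bigA _ (fun i j => a 0 i * b j 0 * M i j)) mxE /=.
under eq_bigr do rewrite mxE big_distrl /=.
rewrite exchange_big; apply: eq_bigr => i _; apply: eq_bigr => j _.
by rewrite mulrAC.
Qed.

Lemma mx_form_delta M i j :
  ((delta_mx 0 i : 'rV_m) *m M *m (delta_mx j 0 : 'cV_n)) 0 0 = M i j.
Proof. by rewrite -rowE -colE !mxE. Qed.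

Lemma mx_form_continuous a b : continuous (fun M => (a *m M *m b) 0 0).
Proof.
rewrite (_ : (fun M => _) = fun M => \sum_p a 0 p.1 * b p.2 0 * M p.1 p.2);
  last by apply: funext => M; rewrite mx_formE.
apply: continuous_big => [|p _ M]; first exact: add_continuous.
exact: continuous_comp (@coord_continuous R _ _ p.1 p.2 M)
  (@mulrl_continuous R _ _).
Qed.

End mx_form.

Section mx_integral.
Context d (X : measurableType d) (R : realType).
Context (mu : {measure set X -> \bar R}) (D : set X) (mD : measurable D).

Definition mx_integral m n (H : X -> 'M[R]_(m, n)) : 'M[R]_(m, n) :=
  \matrix_(i, j) fine (\int[mu]_(x in D) (H x i j)%:E)%E.

Context m n (H : X -> 'M[R]_(m, n)).
Hypothesis H_int : forall i j, mu.-integrable D (fun x => (H x i j)%:E).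

Lemma integral_mx_form (a : 'rV[R]_m) (b : 'cV[R]_n) :
  (\int[mu]_(x in D) ((a *m H x *m b) 0 0)%:E =
   ((a *m mx_integral H *m b) 0 0)%:E)%E.
Proof.
under eq_integral do rewrite mx_formE -sumEFin.
under eq_integral do under eq_bigr do rewrite EFinM.
rewrite integral_sum //; last by move=> p; exact: integrableZl.
rewrite mx_formE -sumEFin; apply: eq_bigr => p _.
by rewrite integralZl // mxE [RHS]EFinM fineK // integrable_fin_num.
Qed.

Lemma mx_integralMr p (C : 'M[R]_(n, p)) :
  mx_integral (fun x => H x *m C) = mx_integral H *m C.
Proof.
apply/matrixP => i j; rewrite mxE.
have -> : (mx_integral H *m C) i j = fine (((delta_mx 0 i : 'rV_m) *m
    mx_integral H *m (C *m (delta_mx j 0 : 'cV_p))) 0 0)%:E.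
  by rewrite /= mulmxA -(mulmxA _ (mx_integral H)) mx_form_delta.
rewrite -integral_mx_form; congr fine; apply: eq_integral => x _.
by rewrite mulmxA -(mulmxA _ (H x)) mx_form_delta.
Qed.

End mx_integral.

Section finite_measure_xsection.
Context d1 d2 (T1 : measurableType d1) (T2 : measurableType d2).
Context (R : realType).
Variable mu : set T2 -> \bar R.
Hypotheses (mu0 : mu set0 = 0) (mu_ge0 : forall A, (0 <= mu A)%E)
  (mu_ssa : semi_sigma_additive mu) (muT_fin : mu setT \is a fin_num).

Let nu := mu.
HB.instance Definition _ := isMeasure.Build _ _ _ nu mu0 mu_ge0 mu_ssa.

Lemma le_measure_setT A : measurable A -> (mu A <= mu setT)%E.
Proof. by move=> mA; apply: (le_measure nu); rewrite ?inE. Qed.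

Let nu_fin : fin_num_fun nu.
Proof.
move=> A mA; rewrite ge0_fin_numE // (le_lt_trans (le_measure_setT mA)) //.
by rewrite -ge0_fin_numE.
Qed.

HB.instance Definition _ := Measure_isFinite.Build _ _ _ nu nu_fin.

Lemma measurable_fun_xsection_finite (A : set (T1 * T2)) : measurable A ->
  measurable_fun setT (mu \o xsection A).
Proof. exact: (@measurable_fun_xsection _ _ _ _ _ nu). Qed.

End finite_measure_xsection.

Lemma open_pos_continuous_le0 d (T : topMeasurableType d) (R : realType)
    (lam : {measure set T -> \bar R}) (s : T -> R) z :
  open_pos lam -> measurable_fun setT s -> {for z, continuous s} ->
  (forall U, open U -> \int[lam]_(w in U) (s w)%:E = 0)%E -> s z <= 0.
Proof.
move=> lam_open ms cs s_int0; rewrite leNgt; apply/negP => sz_gt0.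
have : nbhs z [set w | s z / 2 < s w] by apply: (cvgr_gt (s z) cs); lra.
rewrite nbhsE => -[B [oB Bz] Bs].
have [mB /(_ (ex_intro _ z Bz)) lamB_gt0] := lam_open B oB.
have : ((s z / 2)%:E * lam B <= \int[lam]_(w in B) (s w)%:E)%E.
  rewrite -integral_cst //; apply: ge0_le_integral => //.
  - by move=> w _; rewrite lee_fin; lra.
  - by apply/measurable_EFinP; exact: measurable_funS ms.
  - by move=> w /Bs /=; rewrite lee_fin => /ltW.
rewrite s_int0 // leNgt => /negP; apply; apply: mule_gt0 => //.
by rewrite lte_fin; lra.
Qed.

Lemma piecewise_continuous_eq0 d (T : topMeasurableType d) (R : realType) k
    (Psi : T -> 'M[R]_k) (f : 'M[R]_k -> R) :
  piecewise_continuous Psi -> continuous f ->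
  (forall x, {for x, continuous Psi} -> f (Psi x) = 0) ->
  forall x, f (Psi x) = 0.
Proof.
move=> [C [oC [Psi_cC Psi_lim]]] cf f0 x.
have Psi_cont y : C y -> {for y, continuous Psi}.
  move=> Cy; move: Psi_cC; rewrite continuous_open_subspace //.
  by apply; rewrite inE.
have [Cx|nCx] := pselect (C x); first exact/f0/Psi_cont.
have [u [Cu [_ Psiu]]] := Psi_lim x nCx.
have : f (Psi (u n)) @[n --> \oo] --> f (Psi x) by exact: cvg_comp Psiu (cf _).
have -> : (fun n => f (Psi (u n))) = cst 0.
  by apply: funext => n; exact/f0/Psi_cont.
by move/(cvg_lim (@Rhausdorff R)); rewrite lim_cst.
Qed.

Lemma mxOver_nneg_ge0 {R : realType} m n (M : 'M[R]_(m, n)) i j :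
  M \is a mxOver Num.nneg -> 0 <= M i j.
Proof. by move/mxOverP/(_ i j); rewrite nnegrE. Qed.

Lemma delta_mx_nneg {R : realType} m n (i0 : 'I_m) (j0 : 'I_n) :
  delta_mx i0 j0 \is a @mxOver m n R Num.nneg.
Proof. by apply/mxOverP => i j; rewrite mxE nnegrE ler0n. Qed.

Lemma mx_nneg_split {R : realType} m n (v : 'M[R]_(m, n)) :
  exists vp vm, [/\ v = vp - vm, vp \is a mxOver Num.nneg &
    vm \is a mxOver Num.nneg].
Proof.
exists (map_mx Num.norm v), (map_mx Num.norm v - v); split.
- by rewrite opprB addrC subrK.
- by apply/mxOverP => i j; rewrite mxE nnegrE.
- by apply/mxOverP => i j; rewrite !mxE nnegrE subr_ge0 ler_norm.
Qed.

Section hmm.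
Context {d : measure_display} {T : topMeasurableType d} {R : realType}.
Variables (lam : {measure set T -> \bar R}) (k : nat) (Psi : T -> 'M[R]_k).

Local Notation one := (const_mx 1 : 'cV[R]_k).

Hypotheses (Psi_ge0 : forall x i j, 0 <= Psi x i j)
  (Psi_measurable : forall i j, measurable_fun setT (fun x => Psi x i j))
  (Psi_fin : forall i j, (\int[lam]_x (Psi x i j)%:E)%E \is a fin_num).

Lemma Psi_nneg x : Psi x \is a mxOver Num.nneg.
Proof. by apply/mxOverP => i j; rewrite nnegrE. Qed.

Lemma Psi_integrable D i j : measurable D ->
  lam.-integrable D (fun x => (Psi x i j)%:E).
Proof.
move=> mD; apply: (integrableS measurableT mD) => //; apply/integrableP; split.
  exact/measurable_EFinP.
under eq_integral do rewrite abse_EFin ger0_norm //.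
by rewrite -ge0_fin_numE // integral_ge0 // => x _; rewrite lee_fin.
Qed.

Lemma Psi_mulmx_integrable (C : 'M[R]_k) i j :
  lam.-integrable setT (fun x => ((Psi x *m C) i j)%:E).
Proof.
under eq_fun do rewrite mxE -sumEFin.
apply: integrable_sum => // l _; under eq_fun do rewrite mulrC EFinM.
by apply: integrableZl => //; exact: Psi_integrable.
Qed.

Lemma measurable_mx_form (a : 'rV[R]_k) (b : 'cV[R]_k) :
  measurable_fun setT (fun x => (a *m Psi x *m b) 0 0).
Proof.
under eq_fun do rewrite mx_formE.
by apply: measurable_sum => p; apply: measurable_funM.
Qed.

Definition tsection n (A : set (n.+1.-tuple T)) (x : T) : set (n.-tuple T) :=
  [set t | A (cons_tuple x t)].

Lemma measurable_cons_preimage n (A : set (n.+1.-tuple T)) : measurable A ->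
  measurable [set p : T * n.-tuple T | A (cons_tuple p.1 p.2)].
Proof.
move=> mA; rewrite -[X in measurable X]setTI.
exact: (measurable_cons (f := fst) (g := snd) measurable_fst measurable_snd
  measurableT mA).
Qed.

Lemma xsection_cons_preimage n (A : set (n.+1.-tuple T)) x :
  xsection [set p : T * n.-tuple T | A (cons_tuple p.1 p.2)] x = tsection A x.
Proof. by apply/seteqP; split => t; rewrite /xsection /= inE. Qed.

Lemma measurable_tsection n (A : set (n.+1.-tuple T)) x :
  measurable A -> measurable (tsection A x).
Proof.
move=> mA; rewrite -xsection_cons_preimage.
exact: measurable_xsection (measurable_cons_preimage mA).
Qed.

Definition psi_form n (A : set (n.-tuple T)) (a : 'rV[R]_k) (b : 'cV[R]_k) :=
  prod_int lam (fun t => (\1_A t * (a *m psiw Psi t *m b) 0 0)%:E).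

Definition psi_entry n (A : set (n.-tuple T)) i j :=
  psi_form A (delta_mx 0 i) (delta_mx j 0).

Lemma int_psiE n (A : set (n.-tuple T)) i j :
  int_psi lam Psi A i j = fine (psi_entry A i j).
Proof.
rewrite mxE; congr (fine (prod_int _ _)); apply: funext => t.
by rewrite mx_form_delta.
Qed.

Lemma psi_form0 (A : set (0.-tuple T)) a b :
  psi_form A a b = (\1_A [tuple] * (a *m b) 0 0)%:E.
Proof. by rewrite /psi_form /= mulmx1. Qed.

Lemma psi_formS n (A : set (n.+1.-tuple T)) a b :
  psi_form A a b = (\int[lam]_x psi_form (tsection A x) (a *m Psi x) b)%E.
Proof.
apply: eq_integral => x _; congr prod_int; apply: funext => t.
by rewrite /= mulmxA.
Qed.

Lemma psi_form_ge0 n (A : set (n.-tuple T)) a b :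
  a \is a mxOver Num.nneg -> b \is a mxOver Num.nneg -> (0 <= psi_form A a b)%E.
Proof.
elim: n A a => [|n IH] A a a_nneg b_nneg.
  rewrite psi_form0 lee_fin; apply: mulr_ge0; first by rewrite indicE.
  exact/mxOver_nneg_ge0/mxOverM.
rewrite psi_formS; apply: integral_ge0 => x _; apply: IH => //.
exact: mxOverM (Psi_nneg x).
Qed.

Lemma psi_form_set0 n a b : psi_form (set0 : set (n.-tuple T)) a b = 0.
Proof.
elim: n a => [|n IH] a; first by rewrite psi_form0 indic0 mul0r.
rewrite psi_formS.
under eq_integral do rewrite (_ : tsection _ _ = set0) ?IH //.
exact: integral0.
Qed.

Lemma psi_entry_set0 n i j : psi_entry (set0 : set (n.-tuple T)) i j = 0.
Proof. exact: psi_form_set0. Qed.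

Lemma psi_entry_ge0 n (A : set (n.-tuple T)) i j : (0 <= psi_entry A i j)%E.
Proof. exact/psi_form_ge0/delta_mx_nneg/delta_mx_nneg. Qed.

Lemma int_psi_nneg n (A : set (n.-tuple T)) :
  int_psi lam Psi A \is a mxOver Num.nneg.
Proof.
by apply/mxOverP => i j; rewrite int_psiE nnegrE fine_ge0 // psi_entry_ge0.
Qed.

(* Sigma-additivity at level n is what makes x |-> psi_entry (tsection A x)
   measurable (measurable_fun_xsection_finite), as needed at level n.+1. *)
Definition psi_entry_finite_measure n := forall i j,
  semi_sigma_additive (fun A : set (n.-tuple T) => psi_entry A i j) /\
  psi_entry [set: n.-tuple T] i j \is a fin_num.

Definition psi_form_bilinear n := forall A : set (n.-tuple T), measurable A ->
  forall a b, a \is a mxOver Num.nneg -> b \is a mxOver Num.nneg ->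
  psi_form A a b = ((a *m int_psi lam Psi A *m b) 0 0)%:E.

Section induction_step.
Variable n : nat.
Hypothesis psi_entry_fm : psi_entry_finite_measure n.

Lemma psi_entry_le_setT (A : set (n.-tuple T)) i j : measurable A ->
  (psi_entry A i j <= psi_entry [set: n.-tuple T] i j)%E.
Proof.
move=> mA; have [ssa _] := psi_entry_fm i j.
by have := le_measure_setT (psi_entry_set0 n i j)
  (fun A => psi_entry_ge0 A i j) ssa mA.
Qed.

Lemma psi_entry_fin (A : set (n.-tuple T)) i j : measurable A ->
  psi_entry A i j \is a fin_num.
Proof.
move=> mA; rewrite ge0_fin_numE ?psi_entry_ge0 //.
rewrite (le_lt_trans (psi_entry_le_setT i j mA)) //.
by rewrite -ge0_fin_numE ?psi_entry_ge0 //; have [] := psi_entry_fm i j.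
Qed.

Lemma int_psi_le_setT (A : set (n.-tuple T)) i j : measurable A ->
  int_psi lam Psi A i j <= int_psi lam Psi [set: n.-tuple T] i j.
Proof.
move=> mA; rewrite !int_psiE fine_le ?psi_entry_fin //.
exact: psi_entry_le_setT.
Qed.

Lemma measurable_psi_entry_tsection (A : set (n.+1.-tuple T)) i j :
  measurable A -> measurable_fun setT (fun x => psi_entry (tsection A x) i j).
Proof.
move=> mA; have [ssa fin] := psi_entry_fm i j.
have := measurable_fun_xsection_finite (psi_entry_set0 n i j)
  (fun A => psi_entry_ge0 A i j) ssa fin (measurable_cons_preimage mA).
by apply: eq_measurable_fun => x _ /=; rewrite xsection_cons_preimage.
Qed.

Lemma psi_entry_tsection_bigcup (F : nat -> set (n.+1.-tuple T)) x l j :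
  (forall m, measurable (F m)) -> trivIset setT F ->
  psi_entry (tsection (\bigcup_m F m) x) l j =
  (\sum_(0 <= m <oo) psi_entry (tsection (F m) x) l j)%E.
Proof.
move=> mF tF; have -> : tsection (\bigcup_m F m) x = \bigcup_m tsection (F m) x.
  by apply/seteqP; split => t [m _ Ft]; exists m.
apply/esym/(cvg_lim (@ereal_hausdorff R)); apply: (psi_entry_fm l j).1.
- by move=> m; exact: measurable_tsection.
- by move=> m1 m2 _ _ [t [Ft1 Ft2]]; apply: tF => //; exists (cons_tuple x t).
- by apply: bigcupT_measurable => m; exact: measurable_tsection.
Qed.

Hypothesis psi_form_bil : psi_form_bilinear n.

Definition step_mx (A : set (n.+1.-tuple T)) (x : T) : 'M[R]_k :=
  Psi x *m int_psi lam Psi (tsection A x).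

Lemma step_mx_integrable (A : set (n.+1.-tuple T)) i j : measurable A ->
  lam.-integrable setT (fun x => (step_mx A x i j)%:E).
Proof.
move=> mA; apply: (le_integrable measurableT _ _
  (Psi_mulmx_integrable (int_psi lam Psi [set: n.-tuple T]) i j)).
- apply/measurable_EFinP; under eq_fun do rewrite mxE.
  apply: measurable_sum => l; apply: measurable_funM => //.
  under eq_fun do rewrite int_psiE.
  exact/measurableT_comp/measurable_psi_entry_tsection.
- move=> x _; rewrite !abse_EFin lee_fin !ger0_norm ?mxOver_nneg_ge0 //;
    try exact: mxOverM (Psi_nneg x) (int_psi_nneg _).
  rewrite !mxE; apply: ler_sum => l _; apply: ler_wpM2l => //.
  by apply: int_psi_le_setT; exact: measurable_tsection.
Qed.

Lemma psi_form_step (A : set (n.+1.-tuple T)) a b : measurable A ->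
  a \is a mxOver Num.nneg -> b \is a mxOver Num.nneg ->
  psi_form A a b = (\int[lam]_x ((a *m step_mx A x *m b) 0 0)%:E)%E.
Proof.
move=> mA a_nneg b_nneg; rewrite psi_formS; apply: eq_integral => x _.
rewrite (psi_form_bil (measurable_tsection x mA)) ?mxOverM ?Psi_nneg //.
by rewrite /step_mx mulmxA.
Qed.

Lemma psi_entry_step (A : set (n.+1.-tuple T)) i j : measurable A ->
  psi_entry A i j = (\int[lam]_x (step_mx A x i j)%:E)%E.
Proof.
move=> mA; rewrite /psi_entry psi_form_step ?delta_mx_nneg //.
by under eq_integral do rewrite mx_form_delta.
Qed.

Lemma int_psi_step (A : set (n.+1.-tuple T)) : measurable A ->
  int_psi lam Psi A = mx_integral lam setT (step_mx A).
Proof.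
by move=> mA; apply/matrixP => i j; rewrite int_psiE psi_entry_step // [RHS]mxE.
Qed.

Lemma psi_form_bilinearS : psi_form_bilinear n.+1.
Proof.
move=> A mA a b a_nneg b_nneg; rewrite psi_form_step // integral_mx_form //.
  by rewrite int_psi_step.
by move=> i j; exact: step_mx_integrable.
Qed.

Lemma psi_entry_series (A : set (n.+1.-tuple T)) i j : measurable A ->
  psi_entry A i j =
  (\int[lam]_x \sum_l (Psi x i l)%:E * psi_entry (tsection A x) l j)%E.
Proof.
move=> mA; rewrite psi_entry_step //; apply: eq_integral => x _.
rewrite mxE -sumEFin; apply: eq_bigr => l _.
rewrite EFinM int_psiE fineK //.
by apply: psi_entry_fin; exact: measurable_tsection.
Qed.

Lemma psi_entry_finite_measureS : psi_entry_finite_measure n.+1.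
Proof.
move=> i j; split; last first.
  by rewrite psi_entry_step // integrable_fin_num // step_mx_integrable.
move=> F mF tF mUF.
suff -> : psi_entry (\bigcup_m F m) i j =
    (\sum_(0 <= m <oo) psi_entry (F m) i j)%E.
  by apply: is_cvg_nneseries => m _ _; exact: psi_entry_ge0.
rewrite psi_entry_series //.
transitivity (\int[lam]_x \sum_(0 <= m <oo)
    \sum_l (Psi x i l)%:E * psi_entry (tsection (F m) x) l j)%E.
  apply: eq_integral => x _; rewrite nneseries_sum; last first.
    by move=> l m _; rewrite mule_ge0 ?lee_fin ?psi_entry_ge0.
  apply: eq_bigr => l _; rewrite psi_entry_tsection_bigcup // nneseriesZl //.
  by move=> m _; exact: psi_entry_ge0.
rewrite integral_nneseries //.
- by apply: eq_eseriesr => m _; rewrite psi_entry_series.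
- move=> m; apply: emeasurable_sum => l; apply: emeasurable_funM.
    exact/measurable_EFinP.
  exact: measurable_psi_entry_tsection.
- move=> m x _; apply: sume_ge0 => l _.
  by rewrite mule_ge0 ?lee_fin ?psi_entry_ge0.
Qed.

End induction_step.

Lemma psi_entry0 (A : set (0.-tuple T)) i j :
  psi_entry A i j = (\1_A [tuple] * (i == j)%:R)%:E.
Proof.
by rewrite /psi_entry psi_form0 -[delta_mx 0 i]mulmx1 mx_form_delta mxE.
Qed.

Lemma int_psi0 (A : set (0.-tuple T)) :
  int_psi lam Psi A = (\1_A [tuple] : R)%:M.
Proof.
by apply/matrixP => i j; rewrite int_psiE psi_entry0 /= mxE mulr_natr.
Qed.

Lemma psi_entry_finite_measure0 : psi_entry_finite_measure 0.
Proof.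
move=> i j; split; last by rewrite psi_entry0.
have c_ge0 : (0 : R) <= (i == j)%:R by [].
rewrite (_ : (fun A => _) = mscale (NngNum c_ge0) \d_([tuple] : 0.-tuple T)).
  exact: measure_semi_sigma_additive.
by apply: funext => A; rewrite psi_entry0 /mscale /= /dirac EFinM muleC.
Qed.

Lemma psi_form_bilinear0 : psi_form_bilinear 0.
Proof.
move=> A _ a b _ _; rewrite psi_form0 int_psi0.
by rewrite mul_mx_scalar -scalemxAl [in RHS]mxE.
Qed.

Lemma psi_entry_invariants n :
  psi_entry_finite_measure n /\ psi_form_bilinear n.
Proof.
elim: n => [|n [fm bil]].
  by split; [exact: psi_entry_finite_measure0|exact: psi_form_bilinear0].
by split; [exact: psi_entry_finite_measureS|exact: psi_form_bilinearS].
Qed.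

Lemma psi_formE n (A : set (n.-tuple T)) a b : measurable A ->
  a \is a mxOver Num.nneg -> b \is a mxOver Num.nneg ->
  psi_form A a b = ((a *m int_psi lam Psi A *m b) 0 0)%:E.
Proof. by move=> mA; have [_ bil] := psi_entry_invariants n; exact: bil. Qed.

Definition tupleX n (U : set T) (B : set (n.-tuple T)) : set (n.+1.-tuple T) :=
  [set t | U (thead t) /\ B [tuple of behead t]].

Lemma measurable_tupleX n (U : set T) (B : set (n.-tuple T)) :
  measurable U -> measurable B -> measurable (tupleX U B).
Proof.
move=> mU mB; have mhead := measurable_tnth (ord0 : 'I_n.+1) measurableT mU.
have mtail := measurable_behead measurableT mB.
by have := measurableI _ _ mhead mtail; rewrite !setTI.
Qed.

Lemma tsection_tupleX n (U : set T) (B : set (n.-tuple T)) x :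
  tsection (tupleX U B) x = if x \in U then B else set0.
Proof.
have behead_cons (t : n.-tuple T) : [tuple of behead (cons_tuple x t)] = t.
  exact: val_inj.
apply/seteqP; split => t /=; rewrite /tsection /tupleX /= behead_cons.
  by case=> /mem_set ->.
by case: ifPn => // /set_mem.
Qed.

Lemma int_psi_set0 n : int_psi lam Psi (set0 : set (n.-tuple T)) = 0.
Proof. by apply/matrixP => i j; rewrite int_psiE psi_entry_set0 mxE. Qed.

Lemma int_psi_tupleX n (U : set T) (B : set (n.-tuple T)) :
  measurable U -> measurable B ->
  int_psi lam Psi (tupleX U B) = mx_integral lam U Psi *m int_psi lam Psi B.
Proof.
move=> mU mB; have [fm bil] := psi_entry_invariants n.
rewrite int_psi_step //; last exact: measurable_tupleX.
rewrite -mx_integralMr //; last by move=> i j; exact: Psi_integrable.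
apply/matrixP => i j; rewrite [LHS]mxE [RHS]mxE [in RHS]integral_mkcond.
congr fine; apply: eq_integral => x _.
rewrite /patch /step_mx tsection_tupleX.
by case: ifP => // _; rewrite int_psi_set0 mulmx0 mxE.
Qed.

Definition annihilates_int_psi (r : 'rV[R]_k) :=
  forall n (B : set (n.-tuple T)), measurable B ->
  r *m int_psi lam Psi B *m one = 0.

Lemma hmm_equivE pi1 pi2 :
  hmm_equiv lam Psi pi1 pi2 <-> annihilates_int_psi (pi1 - pi2).
Proof.
split=> equiv n B mB; first by rewrite !mulmxBl equiv // subrr.
by apply/eqP; rewrite -subr_eq0 -!mulmxBl equiv.
Qed.

Lemma annihilates_int_psiN r :
  annihilates_int_psi r -> annihilates_int_psi (- r).
Proof. by move=> r_ann n B mB; rewrite !mulNmx r_ann // oppr0. Qed.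

Lemma annihilates_int_psi_one r : annihilates_int_psi r -> r *m one = 0.
Proof.
move=> r_ann; have := r_ann 0 setT measurableT.
by rewrite int_psi0 indicT mulmx1.
Qed.

Lemma annihilates_int_psi_integral r n (B : set (n.-tuple T)) U :
  annihilates_int_psi r -> measurable B -> measurable U ->
  (\int[lam]_(x in U) ((r *m Psi x *m (int_psi lam Psi B *m one)) 0 0)%:E
   = 0)%E.
Proof.
move=> r_ann mB mU; rewrite integral_mx_form //; last first.
  by move=> i j; exact: Psi_integrable.
rewrite mulmxA -(mulmxA r) -int_psi_tupleX // r_ann ?mxE //.
exact: measurable_tupleX.
Qed.

Section forward.
Hypothesis lam_open : open_pos lam.

Lemma annihilates_int_psi_cont r x n (B : set (n.-tuple T)) :
  annihilates_int_psi r -> {for x, continuous Psi} -> measurable B ->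
  (r *m Psi x *m (int_psi lam Psi B *m one)) 0 0 = 0.
Proof.
move=> r_ann Psi_cx mB; set y := int_psi lam Psi B *m one.
have form_le0 r' : annihilates_int_psi r' -> (r' *m Psi x *m y) 0 0 <= 0.
  move=> r'_ann; apply: (open_pos_continuous_le0 lam_open
    (s := fun z => (r' *m Psi z *m y) 0 0)).
  - exact: measurable_mx_form.
  - by have := continuous_comp Psi_cx (@mx_form_continuous R k k r' y (Psi x)).
  - move=> U oU; have [mU _] := lam_open oU.
    exact: annihilates_int_psi_integral.
have := form_le0 _ (annihilates_int_psiN r_ann).
have := form_le0 _ r_ann.
by rewrite !mulNmx [X in _ -> X <= 0 -> _]mxE; lra.
Qed.

Hypothesis Psi_pc : piecewise_continuous Psi.

Lemma annihilates_int_psiM r x :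
  annihilates_int_psi r -> annihilates_int_psi (r *m Psi x).
Proof.
move=> r_ann n B mB; apply/matrixP => i j; rewrite !ord1 -mulmxA [RHS]mxE.
apply: (piecewise_continuous_eq0 Psi_pc
  (@mx_form_continuous R k k r (int_psi lam Psi B *m one))).
by move=> z Psi_cz; exact: annihilates_int_psi_cont.
Qed.

Lemma annihilates_int_psi_psiw r w :
  annihilates_int_psi r -> annihilates_int_psi (r *m psiw Psi w).
Proof.
elim: w r => [|x w IH] r r_ann /=; first by rewrite mulmx1.
by rewrite mulmxA; apply/IH/annihilates_int_psiM.
Qed.

End forward.

Lemma annihilates_int_psi_words v :
  (forall w, v *m psiw Psi w *m one = 0) -> annihilates_int_psi v.
Proof.
move=> v_words n E mE.
have [vp [vm [vE vp_nneg vm_nneg]]] := mx_nneg_split v.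
have one_nneg : one \is a mxOver Num.nneg.
  by apply/mxOverP => i j; rewrite mxE nnegrE.
(* psi_formE needs nonnegative vectors, hence the splitting of v. *)
have : psi_form E vp one = psi_form E vm one.
  congr prod_int; apply: funext => t; congr (_ * _)%:E.
  have /matrixP/(_ 0 0) := v_words t.
  by rewrite vE !mulmxBl !mxE => /eqP; rewrite subr_eq0 => /eqP.
rewrite !psi_formE // => -[vpE].
have {}vpE : vp *m int_psi lam Psi E *m one = vm *m int_psi lam Psi E *m one.
  by apply/matrixP => i j; rewrite !ord1.
by rewrite vE !mulmxBl vpE subrr.
Qed.

End hmm.

Lemma orth_span_wordsP d (T : topMeasurableType d) (R : realType) k
    (Psi : T -> 'M[R]_k) (v : 'rV[R]_k) :
  orth_span_words Psi v <->
  forall w, v *m psiw Psi w *m (const_mx 1 : 'cV[R]_k) = 0.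
Proof.
split=> [orth w | v_words ws u].
  by rewrite -mulmxA; apply: (orth [:: w]); apply: memv_span; rewrite mem_head.
have : (<<[seq psiw Psi w *m (const_mx 1 : 'cV[R]_k) | w <- ws]>> <=
    lker (linfun (mulmx v)))%VS.
  apply/span_subvP => _ /mapP [w _ ->].
  by rewrite memv_ker lfunE /= mulmxA v_words.
by move/subvP => + u_span => /(_ u u_span); rewrite memv_ker lfunE => /eqP.
Qed.

Theorem proposition7 (d : measure_display) (T : topMeasurableType d)
  (R : realType) (lam : {measure set T -> \bar R}) (k : nat)
  (Psi : T -> 'M[R]_k) :
  open_pos lam -> is_HMM lam Psi ->
  forall pi1 pi2 : 'rV[R]_k,
    hmm_equiv lam Psi pi1 pi2 <-> orth_span_words Psi (pi1 - pi2).
Proof.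
move=> lam_open [Psi_ge0 Psi_meas Psi_pc Psi_fin _] pi1 pi2.
split=> [/hmm_equivE pi_ann | /orth_span_wordsP pi_words].
  apply/orth_span_wordsP => w; apply: annihilates_int_psi_one.
  exact: annihilates_int_psi_psiw.
by apply/hmm_equivE; exact: annihilates_int_psi_words.
Qed.
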